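(* Let $f>0$, $F>0$, $s\in(0,1]$ with $f+sF>1$, let $0<\Delta<F$, and let $\pi_1\in(0,1)$. Consider the two-class stochastic Leslie model with two environments, $\boldsymbol A_1=\begin{pmatrix} f&F\\ s&0\end{pmatrix}$, $\boldsymbol A_2=\begin{pmatrix} f&F-\Delta\\ s&0\end{pmatrix}$, driven by an i.i.d. environmental sequence with $P(\tau_t=1)=\pi_1$, $P(\tau_t=2)=1-\pi_1$. Then $$\log\lambda_S\ \ge\ \log\rho(\boldsymbol A_1)+(1-\pi_1)\log\Big(1-\frac{\Delta}{F}\Big),$$ and consequently, if $$\Delta<F\Big(1-\rho(\boldsymbol A_1)^{\frac{1}{\pi_1-1}}\Big),\qquad \rho(\boldsymbol A_1)=\frac{f+\sqrt{f^2+4sF}}{2},$$ then $\lambda_S>1$, so the total population tends to infinity with probability one.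
   Context: The stochastic growth rate $\lambda_S$ of $\boldsymbol z(t+1)=\boldsymbol A_{\tau_{t+1}}\boldsymbol z(t)$ (with fixed nonzero $\boldsymbol z(0)\ge0$) is defined by $\log\lambda_S=\lim_{t\to\infty}\frac1t\log\|\boldsymbol z(t)\|_1$ almost surely; $\rho$ denotes spectral radius. *)

From HB Require Import structures.
From mathcomp Require Import all_boot all_order all_algebra.
From mathcomp Require Import complex.
From mathcomp Require Import all_classical all_reals all_analysis.
Set Implicit Arguments. Unset Strict Implicit. Unset Printing Implicit Defensive.
Import Order.TTheory GRing.Theory Num.Theory.
Import numFieldNormedType.Exports.
Local Open Scope classical_set_scope.
Local Open Scope ring_scope.

Definition spectral_radius (R : realType) (n : nat) (A : 'M[R]_n) : R :=
  sup [set ComplexField.Normc.normc a | a in [set a : R[i] |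
        eigenvalue (map_mx (fun x : R => (x%:C)%C) A) a]].

Definition norm1 (R : realType) (n : nat) (z : 'cV[R]_n) : R :=
  \sum_(i < n) `|z i ord0|.

(* The two environments of the two-class Leslie model; environment 1 is
   encoded by [true], environment 2 by [false]. *)
Definition leslieA (R : realType) (f F s Delta : R) (e : bool) : 'M[R]_2 :=
  \matrix_(i < 2, j < 2)
     (if (i == 0 :> nat) then (if (j == 0 :> nat) then f
                              else (if e then F else F - Delta))
      else (if (j == 0 :> nat) then s else 0)).

(* trajectory z(0) = z0, z(t+1) = A_{env t} z(t); here [env t] is the
   paper's tau_{t+1}. *)
Fixpoint traj (R : realType) (n : nat) (A : bool -> 'M[R]_n) (z0 : 'cV[R]_n)
  (env : nat -> bool) (t : nat) : 'cV[R]_n :=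
  match t with
  | 0 => z0
  | t'.+1 => A (env t') *m traj A z0 env t'
  end.

(* (tau t)_t is an i.i.d. sequence of {1,2}-valued (here bool-valued)
   random variables with P(tau t = 1) = pi1: mutual independence is the
   product rule over every finite family of indices. *)
Definition iid_env (R : realType) (d : measure_display) (Omega : measurableType d)
  (P : probability Omega R) (tau : nat -> Omega -> bool) (pi1 : R) : Prop :=
  (forall t b, measurable [set w | tau t w = b]) /\
  (forall t, P [set w | tau t w = true] = pi1%:E) /\
  (forall (I : seq nat) (v : nat -> bool), uniq I ->
     P (\big[setI/setT]_(t <- I) [set w | tau t w = v t]) =
     (\prod_(t <- I) P [set w | tau t w = v t])%E).

From HB Require Import structures.
From mathcomp Require Import all_boot all_order all_algebra.
From mathcomp Require Import complex.
From mathcomp Require Import all_classical all_reals all_analysis.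
From mathcomp Require Import measurable_realfun.
From mathcomp Require Import ring lra.
Set Implicit Arguments. Unset Strict Implicit. Unset Printing Implicit Defensive.
Import Order.TTheory GRing.Theory Num.Theory.
Import numFieldNormedType.Exports.
Local Open Scope classical_set_scope.
Local Open Scope ring_scope.

(* The Perron vector v = (rho, s) of A_1 satisfies A_1 v = rho v and
   A_2 v >= rho (1 - Delta/F) v componentwise, so by positivity
   z(t) >= alpha rho^t (1 - Delta/F)^(N t) v for t >= 2, where N t counts the
   steps spent in environment 2.  Hence (1/t) log ||z(t)||_1 is at least
   log rho + (N t / t) log (1 - Delta/F) - O(1/t).  Since E[N t] = (1 - pi1) t,
   Markov's inequality shows that for every eps > 0, with positive probability,
   N t <= (1 - pi1 + eps) t for infinitely many t; along those t the almost
   sure limit log lambda_S is bounded below, and eps -> 0 gives the bound. *)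

Lemma normc_realC (R : realType) (r : R) :
  ComplexField.Normc.normc ((r%:C)%C : R[i]) = `|r|.
Proof. by rewrite /= expr0n /= addr0 sqrtr_sqr. Qed.

Lemma eigenvalue_leslieA1 (R : realType) (f F s Delta : R) (a : R[i]) :
  F != 0 -> s != 0 ->
  eigenvalue (map_mx (fun x : R => (x%:C)%C) (leslieA f F s Delta true)) a <->
  a ^+ 2 = (f%:C)%C * a + ((s * F)%:C)%C.
Proof.
move=> F0 s0.
have Fc : (F%:C)%C != 0 :> R[i] by apply: contra_neq F0 => -[].
have sc : (s%:C)%C != 0 :> R[i] by apply: contra_neq s0 => -[].
have w0 : widen_ord (leqnSn 1) ord_max = 0 :> 'I_2 by apply/val_inj.
have m1 : ord_max = 1 :> 'I_2 by apply/val_inj.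
split.
- move=> /eigenvalueP[v /matrixP hv vn0].
  have := hv 0 0; have := hv 0 1.
  rewrite !mxE !big_ord_recr !big_ord0 !mxE /= w0 m1 !add0r => e1 e0.
  rewrite mulr0 addr0 in e1.
  have v0 : v 0 0 != 0.
    apply: contra_neq vn0 => v00; apply/rowP => j; rewrite mxE.
    have v1 : v 0 1 = 0.
      by move: e0; rewrite v00 mul0r mulr0 add0r => /eqP;
        rewrite mulf_eq0 (negbTE sc) orbF => /eqP.
    by case: j => -[|[|//]] jl; [rewrite -v00|rewrite -v1]; congr (v 0 _); apply/val_inj.
  apply: (mulIf v0); rewrite rmorphM expr2 -mulrA -e0 mulrDr.
  have -> : a * (v 0 1 * (s%:C)%C) = (a * v 0 1) * (s%:C)%C by ring.
  by rewrite -e1; ring.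
- move=> ha; apply/eigenvalueP; exists (\row_j (if j == 0 then a else (F%:C)%C)).
  + apply/rowP=> j; rewrite !mxE !big_ord_recr !big_ord0 !mxE /= ?w0.
    case: j => -[|[|//]] jl /=; rewrite ?mxE /=.
      by rewrite add0r -expr2 ha rmorphM; ring.
    by rewrite ?mul0r; ring.
  + by apply: contra_neq Fc => /rowP/(_ 1); rewrite !mxE.
Qed.

Definition leslie_rho (R : realType) (f F s : R) :=
  (f + Num.sqrt (f ^+ 2 + 4 * s * F)) / 2.

Section LeslieRho.
Variables (R : realType) (f F s : R).

Lemma sqrt_leslie_discriminant : 0 < f -> 0 < F -> 0 < s ->
  let q := Num.sqrt (f ^+ 2 + 4 * s * F) in q ^+ 2 = f ^+ 2 + 4 * s * F /\ f < q.
Proof.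
move=> f0 F0 s0 q.
have q2 : q ^+ 2 = f ^+ 2 + 4 * s * F.
  by rewrite sqr_sqrtr // addr_ge0 ?sqr_ge0 // !mulr_ge0 // ltW.
have q0 : 0 <= q by apply: sqrtr_ge0.
have sF : 0 < s * F by apply: mulr_gt0.
by split=> //; nra.
Qed.

Lemma leslie_rho_root : 0 < f -> 0 < F -> 0 < s ->
  leslie_rho f F s ^+ 2 = f * leslie_rho f F s + s * F.
Proof.
move=> f0 F0 s0; have [q2 _] := sqrt_leslie_discriminant f0 F0 s0.
rewrite /leslie_rho; set q := Num.sqrt _ in q2 *.
have -> : s * F = (q ^+ 2 - f ^+ 2) / 4 by rewrite q2; field.
by field.
Qed.

Lemma leslie_rho_gt1 : 0 < f -> 0 < F -> 0 < s -> 1 < f + s * F ->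
  1 < leslie_rho f F s.
Proof.
move=> f0 F0 s0 fsF; have [q2 fq] := sqrt_leslie_discriminant f0 F0 s0.
rewrite /leslie_rho; set q := Num.sqrt _ in q2 fq *.
have [f2|f2] := leP 2 f; first lra.
have : 2 - f < q by nra.
lra.
Qed.

Lemma eigenvalue_leslieA1_roots Delta (a : R[i]) : 0 < f -> 0 < F -> 0 < s ->
  eigenvalue (map_mx (fun x : R => (x%:C)%C) (leslieA f F s Delta true)) a <->
  a = ((leslie_rho f F s)%:C)%C \/ a = ((f - leslie_rho f F s)%:C)%C.
Proof.
move=> f0 F0 s0; have rho2 := leslie_rho_root f0 F0 s0.
rewrite eigenvalue_leslieA1 ?gt_eqF //.
set rho := leslie_rho f F s in rho2 *; clearbody rho.
have factor : a ^+ 2 - ((f%:C)%C * a + ((s * F)%:C)%C) =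
              (a - (rho%:C)%C) * (a - ((f - rho)%:C)%C).
  rewrite (_ : s * F = rho ^+ 2 - f * rho); last by rewrite rho2; ring.
  by rewrite !rmorphB rmorphXn rmorphM; ring.
split.
- move/eqP; rewrite -subr_eq0 factor mulf_eq0 !subr_eq0 => /orP[]/eqP; auto.
- by move=> h; apply/eqP; rewrite -subr_eq0 factor; case: h => ->; rewrite subrr ?mul0r ?mulr0.
Qed.

Lemma spectral_radius_leslieA1 Delta : 0 < f -> 0 < F -> 0 < s ->
  spectral_radius (leslieA f F s Delta true) = leslie_rho f F s.
Proof.
move=> f0 F0 s0; have [_ fq] := sqrt_leslie_discriminant f0 F0 s0.
have f_lt_rho : f < leslie_rho f F s by rewrite /leslie_rho; lra.
rewrite /spectral_radius; set S := (X in sup X); set rho := leslie_rho f F s in f_lt_rho *.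
have rhoS : S rho.
  exists (rho%:C)%C; last by rewrite normc_realC gtr0_norm //; lra.
  by apply/eigenvalue_leslieA1_roots => //; left.
have ubS : ubound S rho.
  move=> _ [a /(eigenvalue_leslieA1_roots _ _ f0 F0 s0) [] -> <-]; rewrite -/rho normc_realC.
    by rewrite gtr0_norm //; lra.
  by rewrite ltr0_norm; lra.
apply/eqP; rewrite eq_le; apply/andP; split.
  by apply: ge_sup => //; exists rho.
by apply: sup_upper_bound => //; split; exists rho.
Qed.

End LeslieRho.

Definition env2_count (env : nat -> bool) (t : nat) : nat :=
  (\sum_(k < t) (~~ env k : nat))%N.

Lemma env2_countS env t : env2_count env t.+1 = (env2_count env t + ~~ env t)%N.
Proof. by rewrite /env2_count big_ord_recr. Qed.

Lemma coord_le_norm1 (R : realType) (n : nat) (z : 'cV[R]_n) i : z i ord0 <= norm1 z.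
Proof.
rewrite /norm1 (bigD1 i) //= (le_trans (ler_norm _)) // lerDl.
by rewrite sumr_ge0.
Qed.

Section LeslieTrajectory.
Variables (R : realType) (f F s Delta : R) (z0 : 'cV[R]_2) (env : nat -> bool).
Let z := traj (leslieA f F s Delta) z0 env.

Lemma traj_leslie0 t :
  z t.+1 0 0 = f * z t 0 0 + (if env t then F else F - Delta) * z t 1 0.
Proof.
rewrite /z /= !mxE !big_ord_recr big_ord0 /= !mxE /= add0r.
by congr (_ * z t _ _ + _ * z t _ _); apply/val_inj.
Qed.

Lemma traj_leslie1 t : z t.+1 1 0 = s * z t 0 0.
Proof.
rewrite /z /= !mxE !big_ord_recr big_ord0 /= !mxE /= add0r mul0r addr0.
by congr (_ * z t _ _); apply/val_inj.
Qed.

Lemma traj_leslie_ge0 : 0 < f -> 0 < F -> 0 < s -> Delta < F -> (forall i, 0 <= z0 i ord0) ->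
  forall t, 0 <= z t 0 0 /\ 0 <= z t 1 0.
Proof.
move=> f0 F0 s0 DF z00; elim=> [|t [x0 y0]]; first by split; apply: z00.
have Fe : 0 < if env t then F else F - Delta by case: (env t); lra.
by rewrite traj_leslie0 traj_leslie1; split; nra.
Qed.

Lemma traj_leslie2_gt0 : 0 < f -> 0 < F -> 0 < s -> Delta < F ->
  (forall i, 0 <= z0 i ord0) -> z0 != 0 -> 0 < z 2 0 0 /\ 0 < z 2 1 0.
Proof.
move=> f0 F0 s0 DF z00 nz.
have Fe t : 0 < if env t then F else F - Delta by case: (env t); lra.
have [x0 y0] := traj_leslie_ge0 f0 F0 s0 DF z00 0.
have [x1 y1] := traj_leslie_ge0 f0 F0 s0 DF z00 1.
have z0_pos : 0 < z0 0 0 \/ 0 < z0 1 0.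
  rewrite !lt_def x0 y0 !andbT.
  have [u|] := eqVneq (z0 0 0) 0; [right|by left].
  apply: contra_neq nz => v; apply/matrixP => -[[|[|//]] il] j; rewrite (ord1 j) mxE;
    [rewrite -u | rewrite -v]; by congr (z0 _ _); apply/val_inj.
have z1 : 0 < z 1 0 0.
  by rewrite traj_leslie0; have := Fe 0%N; case: z0_pos => ?; nra.
split; last by rewrite traj_leslie1 mulr_gt0.
by rewrite traj_leslie0 ltr_wpDr ?mulr_gt0 // mulr_ge0 // ltW // Fe.
Qed.

Lemma leslie_step_lower (rho c beta x y : R) e :
  0 < f -> 0 < F -> 0 < s -> 0 < rho -> 0 < c -> c <= 1 ->
  F - Delta = c * F -> rho ^+ 2 = f * rho + s * F ->
  0 <= beta -> beta * rho <= x -> beta * s <= y ->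
  beta * rho * c ^+ (~~ e) * rho <= f * x + (if e then F else F - Delta) * y /\
  beta * rho * c ^+ (~~ e) * s <= s * x.
Proof.
move=> f0 F0 s0 rho0 c0 c1 cF rho2 beta0 bx byy.
have fx : f * (beta * rho) <= f * x := ler_wpM2l (ltW f0) bx.
have Fy : F * (beta * s) <= F * y := ler_wpM2l (ltW F0) byy.
have sx : s * (beta * rho) <= s * x := ler_wpM2l (ltW s0) bx.
have E : beta * rho * rho = f * (beta * rho) + F * (beta * s).
  by rewrite -mulrA -expr2 rho2; ring.
case: e => /=; rewrite ?expr0 ?expr1 ?mulr1; first by split; lra.
have x0 : 0 <= x := le_trans (mulr_ge0 beta0 (ltW rho0)) bx.
have cfx : c * (f * x) <= f * x := ler_piMl (mulr_ge0 (ltW f0) x0) c1.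
have csx : c * (s * x) <= s * x := ler_piMl (mulr_ge0 (ltW s0) x0) c1.
have cfx' : c * (f * (beta * rho)) <= c * (f * x) := ler_wpM2l (ltW c0) fx.
have csx' : c * (s * (beta * rho)) <= c * (s * x) := ler_wpM2l (ltW c0) sx.
have cFy : c * (F * (beta * s)) <= c * (F * y) := ler_wpM2l (ltW c0) Fy.
rewrite cF; split.
  have -> : beta * rho * c * rho = c * (beta * rho * rho) by ring.
  rewrite E; lra.
have -> : beta * rho * c * s = c * (s * (beta * rho)) by ring.
lra.
Qed.

Lemma traj_leslie_lower (rho : R) :
  0 < f -> 0 < F -> 0 < s -> 0 < Delta -> Delta < F ->
  (forall i, 0 <= z0 i ord0) -> z0 != 0 -> 0 < rho -> rho ^+ 2 = f * rho + s * F ->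
  exists2 alpha, 0 < alpha & forall t, (2 <= t)%N ->
    alpha * rho ^+ t * (1 - Delta / F) ^+ env2_count env t * rho <= z t 0 0 /\
    alpha * rho ^+ t * (1 - Delta / F) ^+ env2_count env t * s <= z t 1 0.
Proof.
move=> f0 F0 s0 D0 DF z00 nz rho0 rho2.
set c := 1 - Delta / F.
have c0 : 0 < c by rewrite subr_gt0 ltr_pdivrMr // mul1r.
have c1 : c <= 1 by rewrite lerBlDr lerDl divr_ge0 // ltW.
have cF : F - Delta = c * F by rewrite mulrBl mul1r divfK // gt_eqF.
have [x2 y2] := traj_leslie2_gt0 f0 F0 s0 DF z00 nz.
set m := Num.min (z 2 0 0 / rho) (z 2 1 0 / s).
have m0 : 0 < m by rewrite lt_min !divr_gt0.
exists (m / rho ^+ 2); first by rewrite divr_gt0 // exprn_gt0.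
move=> t /subnK <-; elim: (t - 2)%N => [|n IH].
  have cN0 : 0 <= c ^+ env2_count env 2 by rewrite exprn_ge0 // ltW.
  have cN1 : c ^+ env2_count env 2 <= 1 by rewrite exprn_ile1 // ltW.
  have mx : m * rho <= z 2 0 0 by rewrite -ler_pdivlMr // ge_min lexx.
  have my : m * s <= z 2 1 0 by rewrite -ler_pdivlMr // ge_min lexx orbT.
  rewrite add0n (divfK (expf_neq0 _ (lt0r_neq0 rho0))).
  by split; nra.
set beta := m / rho ^+ 2 * rho ^+ (n + 2) * c ^+ env2_count env (n + 2) in IH.
have rhoN0 k : 0 <= rho ^+ k := exprn_ge0 k (ltW rho0).
have beta0 : 0 <= beta :=
  mulr_ge0 (mulr_ge0 (divr_ge0 (ltW m0) (rhoN0 2)) (rhoN0 _)) (exprn_ge0 _ (ltW c0)).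
have -> : m / rho ^+ 2 * rho ^+ (n.+1 + 2) * c ^+ env2_count env (n.+1 + 2) =
          beta * rho * c ^+ (~~ env (n + 2)).
  by rewrite addSn env2_countS exprD (exprS rho (n + 2)) /beta; ring.
rewrite addSn traj_leslie0 traj_leslie1.
case: IH => IHx IHy.
exact: leslie_step_lower f0 F0 s0 rho0 c0 c1 cF rho2 beta0 IHx IHy.
Qed.

Lemma ln_norm1_traj_leslie_lower (rho : R) :
  0 < f -> 0 < F -> 0 < s -> 0 < Delta -> Delta < F ->
  (forall i, 0 <= z0 i ord0) -> z0 != 0 -> 0 < rho -> rho ^+ 2 = f * rho + s * F ->
  exists K, forall t, (2 <= t)%N ->
    K + t%:R * ln rho + (env2_count env t)%:R * ln (1 - Delta / F) <= ln (norm1 (z t)).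
Proof.
move=> f0 F0 s0 D0 DF z00 nz rho0 rho2.
have c0 : 0 < 1 - Delta / F by rewrite subr_gt0 ltr_pdivrMr // mul1r.
have [alpha alpha0 low] := traj_leslie_lower f0 F0 s0 D0 DF z00 nz rho0 rho2.
exists (ln alpha + ln rho) => t t2; have [lowx _] := low t t2.
have rhot0 : 0 < rho ^+ t := exprn_gt0 t rho0.
have ct0 : 0 < (1 - Delta / F) ^+ env2_count env t := exprn_gt0 _ c0.
have a0 : 0 < alpha * rho ^+ t := mulr_gt0 alpha0 rhot0.
have b0 : 0 < alpha * rho ^+ t * (1 - Delta / F) ^+ env2_count env t := mulr_gt0 a0 ct0.
have zt := le_trans lowx (coord_le_norm1 (z t) 0).
have bz0 := mulr_gt0 b0 rho0.
have norm_gt0 := lt_le_trans bz0 zt.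
rewrite -ler_ln ?posrE // in zt.
apply: le_trans zt.
rewrite !lnM ?posrE // !lnXn // -[ln rho *+ _]mulr_natl -[ln (1 - _) *+ _]mulr_natl.
lra.
Qed.

End LeslieTrajectory.

Section Env2Count.
Context (R : realType) (d : measure_display) (Omega : measurableType d)
  (P : probability Omega R) (tau : nat -> Omega -> bool) (pi1 : R).
Hypothesis mtau : forall t b, measurable [set w | tau t w = b].
Hypothesis Ptau : forall t, P [set w | tau t w = true] = pi1%:E.

Let env2 k := [set w | tau k w = false].
Let measurable_env2 k : measurable (env2 k). Proof. exact: mtau. Qed.

Lemma env2_count_indicator t w :
  (env2_count (tau^~ w) t)%:R = \sum_(k < t) \1_(env2 k) w :> R.
Proof.
rewrite /env2_count natr_sum; apply: eq_bigr => k _.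
rewrite indicE /env2; case E: (tau k w) => /=; first by rewrite memNset //= E.
by rewrite mem_set.
Qed.

Lemma measurable_env2_count t :
  measurable_fun setT (fun w => (env2_count (tau^~ w) t)%:R : R).
Proof.
rewrite (_ : (fun w => _) = fun w => \sum_(k < t) \1_(env2 k) w); last first.
  by apply/funext => w; rewrite env2_count_indicator.
by apply: measurable_sum => k; apply/measurable_indic/measurable_env2.
Qed.

Lemma measurable_env2_count_gt t (a : R) :
  measurable [set w | a < (env2_count (tau^~ w) t)%:R].
Proof.
have := measurable_env2_count t measurableT (measurable_itv `]a, +oo[).
by rewrite setTI; congr measurable; apply/seteqP; split => w /=; rewrite in_itv /= andbT.
Qed.

Lemma prob_env2 k : P (env2 k) = (1 - pi1)%:E.
Proof.
have -> : env2 k = ~` [set w | tau k w = true].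
  by apply/seteqP; split => w; rewrite /env2 /=; case: (tau k w).
by rewrite probability_setC ?Ptau.
Qed.

Lemma expectation_env2_count t :
  (\int[P]_w ((env2_count (tau^~ w) t)%:R)%:E = (t%:R * (1 - pi1))%:E)%E.
Proof.
under eq_integral do rewrite env2_count_indicator -sumEFin.
rewrite ge0_integral_sum //; last first.
  by move=> k; apply/measurable_EFinP; apply/measurable_indic/measurable_env2.
under eq_bigr => k _ do rewrite (integral_indic _ measurableT (measurable_env2 k)) setIT.
rewrite (eq_bigr (fun=> (1 - pi1)%:E)); last by move=> k _; exact: prob_env2.
by rewrite sumEFin sumr_const card_ord mulr_natl.
Qed.

Lemma markov_env2_count t (a : R) : 0 < a -> (0 < t)%N ->
  (P [set w | (a * t%:R < (env2_count (tau^~ w) t)%:R)%R] <= ((1 - pi1) / a)%:E)%E.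
Proof.
move=> a0 t0; set D := [set w | _ < _].
have mD : measurable D := measurable_env2_count_gt t (a * t%:R).
have at0 : 0 < a * t%:R by rewrite mulr_gt0 // ltr0n.
have markov_ineq : ((a * t%:R)%:E * P D <= (t%:R * (1 - pi1))%:E)%E.
  rewrite -expectation_env2_count -(setIT D) -integral_indic //.
  rewrite -ge0_integralZl_EFin //; last 2 first.
  - by apply/measurable_EFinP/measurable_indic.
  - exact: ltW.
  apply: ge0_le_integral => //.
  - by move=> x _; rewrite lee_fin indicE mulr_ge0 // ltW.
  - by apply/measurable_EFinP/measurable_funM => //; apply/measurable_indic.
  - by apply/measurable_EFinP; apply: measurable_env2_count.
  move=> x _; rewrite lee_fin indicE.
  by case: (boolP (x \in D)) => [|_]; rewrite ?mulr0 // inE mulr1 => /ltW.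
move: markov_ineq (measure_ge0 P D) (probability_le1 P mD).
case: (P D) => [r| |] //= + r0 _; last by rewrite leNye.
rewrite -EFinM !lee_fin => markov_ineq.
have tp : 0 < t%:R :> R by rewrite ltr0n.
by rewrite ler_pdivlMr //; nra.
Qed.

Lemma measurable_env2_count_always_gt (a : R) T :
  measurable [set w | forall t, (T <= t)%N -> a * t%:R < (env2_count (tau^~ w) t)%:R].
Proof.
rewrite (_ : [set w | _] =
  \bigcap_n [set w | a * (T + n)%N%:R < (env2_count (tau^~ w) (T + n))%:R]).
  by apply: bigcapT_measurable => n; apply: measurable_env2_count_gt.
apply/seteqP; split => w /= h; first by move=> n _; apply/h/leq_addr.
by move=> t Tt; have := h (t - T)%N I; rewrite subnKC.
Qed.

Lemma prob_env2_count_eventually_gt (a : R) : 0 < a ->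
  (P (\bigcup_T [set w | forall t, (T <= t)%N ->
        (a * t%:R < (env2_count (tau^~ w) t)%:R)%R]) <= ((1 - pi1) / a)%:E)%E.
Proof.
move=> a0; set H := fun T => [set w | _].
have mH T : measurable (H T) := measurable_env2_count_always_gt a T.
have mU : measurable (\bigcup_T H T) by apply: bigcupT_measurable.
have H_nd : {homo H : n m / (n <= m)%N >-> (n <= m)%O}.
  by move=> n m nm; apply/asboolP => w /= h t mt; apply/h/(leq_trans nm).
rewrite -(cvg_lim _ (nondecreasing_cvg_mu mH mU H_nd)) //.
apply: lime_le; first by apply/cvg_ex; eexists; exact: nondecreasing_cvg_mu mH mU H_nd.
apply: nearW => T; apply: le_trans (markov_env2_count a0 (ltn0Sn T)).
apply: le_measure; rewrite ?inE //; first exact: measurable_env2_count_gt.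
by move=> w; apply.
Qed.

Lemma ae_env2_count_frequently_le (G : Omega -> Prop) (eps : R) : 0 < eps ->
  {ae P, forall w, G w} ->
  exists2 w, G w & forall T, exists2 t, (T <= t)%N &
    (env2_count (tau^~ w) t)%:R <= (1 - pi1 + eps) * t%:R.
Proof.
move=> e0 [N [mN PN GN]].
have pi1_le1 : pi1 <= 1 by rewrite -lee_fin -(Ptau 0) probability_le1.
have a0 : 0 < 1 - pi1 + eps by lra.
have q1 : (1 - pi1) / (1 - pi1 + eps) < 1 by rewrite ltr_pdivrMr // mul1r; lra.
apply: contrapT => nofreq.
have notN_eventually : ~` N `<=` \bigcup_T [set w | forall t, (T <= t)%N ->
    ((1 - pi1 + eps) * t%:R < (env2_count (tau^~ w) t)%:R)%R].
  move=> w Nw; apply: contrapT => notH; apply: nofreq; exists w.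
    by apply: contrapT => /GN.
  move=> T; apply: contrapT => noT; apply: notH; exists T => // t Tt /=.
  by rewrite ltNge; apply/negP => le; apply: noT; exists t.
have : (1 <= ((1 - pi1) / (1 - pi1 + eps))%:E)%E.
  apply: le_trans (prob_env2_count_eventually_gt a0).
  rewrite -(sube0 1%E) -PN -probability_setC //.
  apply: le_measure notN_eventually; rewrite inE.
  - exact: measurableC.
  - by apply: bigcupT_measurable => T; apply: measurable_env2_count_always_gt.
by rewrite lee_fin; lra.
Qed.

End Env2Count.

Lemma growth_rate_ge (R : realType) (v : nat -> R) (N : nat -> nat) (K lr lc a L : R) :
  lc <= 0 ->
  (forall t, (2 <= t)%N -> K + t%:R * lr + (N t)%:R * lc <= v t) ->
  (fun t => t%:R^-1 * v t) @ \oo --> L ->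
  (forall T, exists2 t, (T <= t)%N & (N t)%:R <= a * t%:R) ->
  lr + a * lc <= L.
Proof.
move=> lc0 low cvL freq; apply/ler_addgt0Pr => e e0.
have e20 : 0 < e / 2 by rewrite divr_gt0.
move/cvgrPdist_lt/(_ _ e20): cvL => [T1 _ nearL].
have [t] := freq (maxn (maxn T1 (Num.trunc (`|K| / (e / 2))).+1) 2).
rewrite !geq_max => /andP[/andP[tT1 tK] t2] Nt.
have t0 : 0 < t%:R :> R by rewrite ltr0n (leq_trans _ t2).
have Kt : `|K| < e / 2 * t%:R.
  rewrite mulrC -ltr_pdivrMr //; apply: lt_le_trans (truncnS_gt _) _.
  by rewrite ler_nat.
have vt : v t < t%:R * (L + e / 2).
  move: (nearL t tT1); rewrite /= ltr_distlC => /andP[_].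
  by rewrite [_^-1 * _]mulrC ltr_pdivrMr // mulrC.
have aN : a * t%:R * lc <= (N t)%:R * lc := ler_wnM2r lc0 Nt.
have := low t t2; have := ler_norm (- K); rewrite normrN => nK lowt.
rewrite -(ler_pM2l t0); lra.
Qed.

Lemma ler_of_slack (R : realFieldType) (x y c L : R) : c < 0 ->
  (forall e, 0 < e -> x + (y + e) * c <= L) -> x + y * c <= L.
Proof.
move=> c0 slack; apply/ler_addgt0Pr => e e0.
have nc : 0 < - c by rewrite oppr_gt0.
have := slack (e / - c) (divr_gt0 e0 nc).
rewrite mulrDl (_ : e / - c * c = - e); first lra.
by field; rewrite lt_eqF.
Qed.

Lemma ln_growth_gt0_of_threshold (R : realType) (rho c pi1 : R) :
  1 < rho -> 0 < c -> pi1 < 1 -> rho `^ (pi1 - 1)^-1 < c ->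
  0 < ln rho + (1 - pi1) * ln c.
Proof.
move=> rho1 c0 p1 rhoc.
have pow0 : 0 < rho `^ (pi1 - 1)^-1 by apply: powR_gt0; lra.
have : ln (rho `^ (pi1 - 1)^-1) < ln c by rewrite ltr_ln ?posrE.
rewrite ln_powR => lnlt.
have : (1 - pi1) * ((pi1 - 1)^-1 * ln rho) < (1 - pi1) * ln c.
  by rewrite ltr_pM2l // subr_gt0.
have -> : (1 - pi1) * ((pi1 - 1)^-1 * ln rho) = - ln rho.
  by field; rewrite subr_eq0 lt_eqF.
lra.
Qed.

Lemma ln_growth_gt0_cvgry (R : realType) (u : nat -> R) (L : R) : 0 < L ->
  (fun t => t%:R^-1 * ln (u t)) @ \oo --> L -> u @ \oo --> +oo.
Proof.
move=> L0 cvL; apply/cvgryPge => A.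
have L20 : 0 < L / 2 by rewrite divr_gt0.
move/cvgrPdist_lt/(_ _ L20): cvL => [T _ nearL].
exists (maxn (maxn T (Num.trunc (`|A| / (L / 2))).+1) 1) => // t /=.
rewrite !geq_max => /andP[/andP[tT tA] t1].
have t0 : 0 < t%:R :> R by rewrite ltr0n.
have lnu : t%:R * (L / 2) < ln (u t).
  move: (nearL t tT); rewrite /= ltr_distlC => /andP[+ _].
  by rewrite [_^-1 * _]mulrC ltr_pdivlMr // => ?; lra.
have At : `|A| < t%:R * (L / 2).
  by rewrite -ltr_pdivrMr //; apply: lt_le_trans (truncnS_gt _) _; rewrite ler_nat.
have lnu0 : 0 < ln (u t) by apply: lt_trans lnu; rewrite mulr_gt0.
have u0 : 0 < u t by rewrite ltNge; apply: contraTN lnu0 => /ln0 ->; rewrite ltxx.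
have := expR_ge1Dx (ln (u t)); rewrite lnK ?posrE //.
have := ler_norm A; lra.
Qed.

Theorem mainTheorem7 (R : realType) (d : measure_display) (Omega : measurableType d)
  (P : probability Omega R) (tau : nat -> Omega -> bool)
  (f F s Delta pi1 : R) (z0 : 'cV[R]_2) (logLambdaS : R) :
  0 < f -> 0 < F -> 0 < s -> s <= 1 -> 1 < f + s * F ->
  0 < Delta -> Delta < F -> 0 < pi1 -> pi1 < 1 ->
  iid_env P tau pi1 ->
  (forall i, 0 <= z0 i ord0) -> z0 != 0 ->
  {ae P, forall w, (fun t : nat =>
      (t%:R)^-1 * ln (norm1 (traj (leslieA f F s Delta) z0 (tau^~ w) t)))
      @ \oo --> logLambdaS} ->
  ln (spectral_radius (leslieA f F s Delta true))
     + (1 - pi1) * ln (1 - Delta / F) <= logLambdaS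
  /\ spectral_radius (leslieA f F s Delta true)
       = (f + Num.sqrt (f ^+ 2 + 4 * s * F)) / 2
  /\ (Delta < F * (1 - spectral_radius (leslieA f F s Delta true)
                          `^ ((pi1 - 1)^-1)) ->
      1 < expR logLambdaS /\
      {ae P, forall w, (fun t : nat =>
          norm1 (traj (leslieA f F s Delta) z0 (tau^~ w) t)) @ \oo --> +oo}).
Proof.
move=> f0 F0 s0 _ fsF D0 DF _ p1 [mtau [Ptau _]] z00 nz growth.
rewrite spectral_radius_leslieA1 //.
have rho1 : 1 < leslie_rho f F s := leslie_rho_gt1 f0 F0 s0 fsF.
have c0 : 0 < 1 - Delta / F by rewrite subr_gt0 ltr_pdivrMr // mul1r.
have lnc : ln (1 - Delta / F) < 0 by rewrite ln_lt0 // c0 ltrBlDr ltrDl divr_gt0.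
have lower : ln (leslie_rho f F s) + (1 - pi1) * ln (1 - Delta / F) <= logLambdaS.
  apply: (ler_of_slack lnc) => e e0.
  have [w cvw freq] := ae_env2_count_frequently_le mtau Ptau e0 growth.
  have [K lowK] := ln_norm1_traj_leslie_lower (tau^~ w) f0 F0 s0 D0 DF z00 nz
    (lt_trans ltr01 rho1) (leslie_rho_root f0 F0 s0).
  exact: growth_rate_ge (ltW lnc) lowK cvw freq.
split=> //; split=> // threshold.
have L0 : 0 < logLambdaS.
  apply: lt_le_trans lower; apply: ln_growth_gt0_of_threshold => //.
  by rewrite ltrBrDl -ltrBrDr ltr_pdivrMr // mulrC.
split; first exact: pexpR_gt1.
by apply: filterS growth => w; apply: ln_growth_gt0_cvgry.
Qed.
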